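(* Let $M$ be a metric structure. If for $1\leq j\leq n$ the definable predicates $\phi_j(x)=\phi_j(x_1,\dots,x_m)$ have the strong Erdős–Hajnal property, and $u:[0,1]^n\to[0,1]$ is continuous, then $u(\phi_1(x),\dots,\phi_n(x))$ also has the strong Erdős–Hajnal property.
   Context: A $[0,1]$-valued definable predicate $\phi(x_1,\dots,x_m)$ on $M$ has the strong Erdős–Hajnal property if for every $\varepsilon>0$ there is $\delta>0$ such that for all finite $A_i\subseteq M^{x_i}$ ($1\le i\le m$) there are $B_i\subseteq A_i$ with $|B_i|\geq\delta|A_i|$ such that $(B_1,\dots,B_m)$ is $(\phi,\varepsilon)$-homogeneous, i.e. $|\phi(a)-\phi(a')|\leq\varepsilon$ for all $a,a'\in B_1\times\dots\times B_m$. *)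

From HB Require Import structures.
From mathcomp Require Import all_boot all_order all_algebra.
From mathcomp Require Import all_classical all_reals topology normedtype.
Set Implicit Arguments. Unset Strict Implicit. Unset Printing Implicit Defensive.
Import Order.TTheory GRing.Theory Num.Theory.
Import numFieldNormedType.Exports.
Local Open Scope ring_scope.

(* X i plays the role of M^{x_i}; a predicate phi(x_1,...,x_m) is a
   function on the dependent product of the X i. Finite subsets are
   duplicate-free sequences. *)

Definition homogeneous (R : realType) (m : nat) (X : 'I_m -> eqType)
  (phi : (forall i : 'I_m, X i) -> R) (eps : R)
  (B : forall i : 'I_m, seq (X i)) : Prop :=
  forall a a' : forall i : 'I_m, X i,
    (forall i, a i \in B i) -> (forall i, a' i \in B i) ->
    `|phi a - phi a'| <= eps.

Definition strong_EH (R : realType) (m : nat) (X : 'I_m -> eqType)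
  (phi : (forall i : 'I_m, X i) -> R) : Prop :=
  forall eps : R, 0 < eps ->
  exists2 delta : R, 0 < delta &
    forall A : forall i : 'I_m, seq (X i), (forall i, uniq (A i)) ->
    exists B : forall i : 'I_m, seq (X i),
      (forall i, [/\ uniq (B i), {subset B i <= A i} &
                     delta * (size (A i))%:R <= (size (B i))%:R])
      /\ homogeneous phi eps B.

Definition unit_cube (R : realType) (n : nat) : set 'rV[R]_n :=
  [set v | forall j : 'I_n, 0 <= v ord0 j <= 1].

From HB Require Import structures.
From mathcomp Require Import all_boot all_order all_algebra.
From mathcomp Require Import all_classical all_reals topology normedtype.
Set Implicit Arguments. Unset Strict Implicit.
Import Order.TTheory GRing.Theory Num.Theory.
Import numFieldNormedType.Exports.
Local Open Scope ring_scope.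
Local Open Scope classical_set_scope.

(* By Heine-Cantor, u is uniformly continuous on the compact cube: inputs at
   sup-distance < d have outputs at distance < eps.  Applying the strong
   Erdos-Hajnal property of phi_1, ..., phi_n one after the other, each time
   inside the subfamily produced by the previous step, yields subfamilies of
   relative size delta_1 * ... * delta_n on which every phi_j varies by at
   most d / 2, hence on which the vector (phi_j)_j varies by less than d. *)

Lemma compact_within_unif_continuous {R : realType} {U V : pseudoMetricType R}
    (K : set U) (f : U -> V) :
  compact K -> {within K, continuous f} ->
  forall e, 0 < e -> exists2 d, 0 < d &
    forall x y, K x -> K y -> ball x d y -> ball (f x) e (f y).
Proof.
move=> /compact_near_coveringP/near_covering_withinP cK cf e e0.
have near_unif : \forall d \near 0^'+,
    K `<=` [set x | forall y, K y -> ball x d y -> ball (f x) e (f y)].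
  apply: cK => x Kx.
  have /cvg_ballP/(_ (e / 2)) := proj1 (subspace_continuousP K f) cf x Kx.
  rewrite divr_gt0 // => /(_ isT) /nbhs_ballP[r r0 fx_close].
  near=> x' d => /= Kx' y Ky x'y.
  have xx' : ball x (r / 2) x'.
    by near: x'; apply: nbhsx_ballx; rewrite divr_gt0.
  have dr : d < r / 2 by near: d; apply: nbhs_right_lt; rewrite divr_gt0.
  apply: (@ball_splitr _ _ (f x)); apply: fx_close => //.
    by apply: le_ball xx'; rewrite ler_pdivrMr // ler_pMr // ler1n.
  by rewrite [r]splitr; apply: ball_triangle xx' (le_ball (ltW dr) x'y).
have [d [d0 dP]] := filter_ex (filterI (nbhs_right_gt 0) near_unif).
exists d; first exact: d0.
by move=> x y Kx; apply: dP.
Unshelve. all: by end_near.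
Qed.

Lemma unit_cube_compact {R : realType} {n : nat} : compact (@unit_cube R n).
Proof.
have -> : @unit_cube R n = [set v | forall j, `[0, 1] (v ord0 j)].
  by apply/seteqP; split=> v /= v01 j; have := v01 j; rewrite /= in_itv.
exact: (@rV_compact R n (fun=> `[0, 1]) (fun=> @segment_compact R 0 1)).
Qed.

Section LargeSubfamilies.
Variables (R : realType) (m : nat) (X : 'I_m -> eqType).
Implicit Types (A B C : forall i, seq (X i)) (phi : (forall i, X i) -> R).

Definition large_subfamily (delta : R) A B : Prop :=
  forall i, [/\ uniq (B i), {subset B i <= A i} &
                delta * (size (A i))%:R <= (size (B i))%:R].

Definition EH_with phi (eps delta : R) : Prop :=
  forall A, (forall i, uniq (A i)) ->
  exists B, large_subfamily delta A B /\ homogeneous phi eps B.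

Lemma large_subfamily_refl A : (forall i, uniq (A i)) -> large_subfamily 1 A A.
Proof. by move=> uA i; split; rewrite ?mul1r. Qed.

Lemma large_subfamily_trans (delta delta' : R) A B C : 0 <= delta' ->
  large_subfamily delta A B -> large_subfamily delta' B C ->
  large_subfamily (delta' * delta) A C.
Proof.
move=> delta'0 lAB lBC i; have [_ sAB AB] := lAB i; have [uC sBC BC] := lBC i.
split=> //; first by move=> x /sBC /sAB.
by rewrite -mulrA; apply: le_trans BC; rewrite ler_wpM2l.
Qed.

Lemma homogeneous_subset phi (eps : R) B C :
  (forall i, {subset C i <= B i}) ->
  homogeneous phi eps B -> homogeneous phi eps C.
Proof. by move=> sCB hB a a' aC a'C; apply: hB => i; apply: sCB. Qed.

Lemma EH_with_seq (J : eqType) (phi : J -> (forall i, X i) -> R) (eps : R)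
    (delta : J -> R) (s : seq J) :
  (forall j, 0 <= delta j) -> (forall j, EH_with (phi j) eps (delta j)) ->
  forall A, (forall i, uniq (A i)) ->
  exists B, large_subfamily (\prod_(j <- s) delta j) A B /\
            {in s, forall j, homogeneous (phi j) eps B}.
Proof.
move=> delta0 EHphi; elim: s => [|j s IHs] A uA.
  by exists A; rewrite big_nil; split=> //; exact: large_subfamily_refl.
have [B [lAB homB]] := IHs A uA.
have [C [lBC homC]] := EHphi j B (fun i => let: And3 uB _ _ := lAB i in uB).
exists C; split; first by rewrite big_cons; exact: large_subfamily_trans lBC.
move=> k; rewrite in_cons => /predU1P[-> //|ks].
by apply: homogeneous_subset (homB k ks) => i; have [] := lBC i.
Qed.

Lemma strong_EH_simultaneous (J : finType) (phi : J -> (forall i, X i) -> R) :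
  (forall j, strong_EH (phi j)) ->
  forall eps : R, 0 < eps -> exists2 delta : R, 0 < delta &
  forall A, (forall i, uniq (A i)) ->
  exists B, large_subfamily delta A B /\ forall j, homogeneous (phi j) eps B.
Proof.
move=> EHphi eps eps0.
have /choice[delta /all_and2[delta0 EHdelta]] :
    forall j, exists delta, 0 < delta /\ EH_with (phi j) eps delta.
  by move=> j; have [delta ? ?] := EHphi j eps eps0; exists delta.
exists (\prod_(j <- enum J) delta j); first exact: prodr_gt0.
move=> A uA.
have [B [lAB homB]] :=
  EH_with_seq (enum J) (fun j => ltW (delta0 j)) EHdelta uA.
by exists B; split=> // j; apply: homB; rewrite mem_enum.
Qed.

End LargeSubfamilies.

Lemma homogeneous_row_le (R : realType) (m n : nat) (X : 'I_m -> eqType)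
    (phi : 'I_n -> (forall i, X i) -> R) (eps : R) (B : forall i, seq (X i)) :
  0 <= eps -> (forall j, homogeneous (phi j) eps B) ->
  forall a a', (forall i, a i \in B i) -> (forall i, a' i \in B i) ->
  `|\row_j phi j a - \row_j phi j a'| <= eps.
Proof.
move=> eps0 homB a a' aB a'B.
rewrite [leLHS]mx_normrE; apply: bigmax_le => // -[i j] _ /=.
by rewrite !mxE; exact: homB.
Qed.

Theorem mainTheorem10 (R : realType) (m n : nat) (X : 'I_m -> eqType)
  (phi : 'I_n -> (forall i : 'I_m, X i) -> R)
  (u : 'rV[R]_n -> R) :
  (forall j x, (0 <= phi j x <= 1)%R) ->
  (forall j, strong_EH (phi j)) ->
  {within @unit_cube R n, continuous u} ->
  (forall v, @unit_cube R n v -> (0 <= u v <= 1)%R) ->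
  strong_EH (fun x => u (\row_(j < n) phi j x)).
Proof.
move=> phi01 EHphi cu _ eps eps0.
have [d d0 unif_u] :=
  compact_within_unif_continuous unit_cube_compact cu eps0.
have d2_gt0 : 0 < d / 2 by rewrite divr_gt0.
have [delta delta0 EHdelta] := strong_EH_simultaneous EHphi d2_gt0.
exists delta => // A uA; have [B [lAB homB]] := EHdelta A uA.
exists B; split => // a a' aB a'B.
have row_in_cube x : unit_cube (\row_j phi j x) by move=> j; rewrite mxE.
apply/ltW; suff : ball (u (\row_j phi j a)) eps (u (\row_j phi j a')).
  by rewrite -ball_normE.
apply: unif_u; [exact: row_in_cube | exact: row_in_cube |].
rewrite -ball_normE /=.
apply: le_lt_trans (homogeneous_row_le (ltW d2_gt0) homB aB a'B) _.
by rewrite ltr_pdivrMr // ltr_pMr // ltr1n.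
Qed.
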